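(* Let $\epsilon=\epsilon_1\cdots\epsilon_n$ be a sequence and let $\epsilon'$ be the sequence obtained by applying Algorithm A (described below) to $\epsilon$. Then $\operatorname{Em}(p,\epsilon)=\operatorname{Em}(q,\epsilon')$ and $\operatorname{Em}(q,\epsilon)=\operatorname{Em}(p,\epsilon')$; that is, the algorithm exchanges the occurrences of $p=\underline{0102}$ and $q=\underline{0112}$.
   Context: The reduction of an integer word replaces each occurrence of its $k$-th smallest distinct value by $k-1$; a consecutive pattern $\underline{p_1p_2p_3p_4}$ occurs in a sequence at position $i$ if the reduction of its entries in positions $i,\dots,i+3$ equals $p_1p_2p_3p_4$, and $\operatorname{Em}(p,\epsilon)$ denotes the set of positions of occurrences of $p$ in $\epsilon$. Let $p=\underline{0102}$ and $q=\underline{0112}$. Algorithm A, on input an integer sequence $\mathrm{seq}=\epsilon_1\cdots\epsilon_n$: let $E_p$, $E_q$ be the sets of positions of occurrences of $p$, resp. $q$, in the input sequence; set $\mathrm{last}:=$ null. For $i=1,2,\dots,n$ in order: let $N_p,N_q$ be the sets of positions of occurrences of $p$, resp. $q$, in the current sequence. If $i-2\in E_p$: set $\mathrm{last}:=\mathrm{seq}[i]$ and $\mathrm{seq}[i]:=\mathrm{seq}[i-1]$. Else if $i-2\in E_q$: set $\mathrm{last}:=\mathrm{seq}[i]$ and $\mathrm{seq}[i]:=\mathrm{seq}[i-2]$. Else if $i-2\in N_p$ or $i-2\in N_q$: swap the values of $\mathrm{seq}[i]$ and $\mathrm{last}$. Output $\mathrm{seq}$. *)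

From mathcomp Require Import all_boot all_order all_algebra.
Set Implicit Arguments. Unset Strict Implicit. Unset Printing Implicit Defensive.
Import Order.TTheory GRing.Theory Num.Theory.
Local Open Scope ring_scope.

Definition red (w : seq int) : seq nat :=
  [seq size (undup [seq y <- w | y < x]) | x <- w].

(* Occurrence of the consecutive pattern pat (of length 4) in s at the
   1-indexed position i: red (s_i s_{i+1} s_{i+2} s_{i+3}) = pat. *)
Definition occurs (pat : seq nat) (s : seq int) (i : nat) : bool :=
  [&& (1 <= i)%N, (i + 3 <= size s)%N & red (take 4 (drop i.-1 s)) == pat].

Definition Em (pat : seq nat) (s : seq int) : seq nat :=
  [seq i <- iota 1 (size s) | occurs pat s i].

Definition pat_p : seq nat := [:: 0; 1; 0; 2]%N.
Definition pat_q : seq nat := [:: 0; 1; 1; 2]%N.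

(* One step of Algorithm A at (1-indexed) position i.
   e0 = input sequence, state = (current sequence, last).
   seq[i] is nth 0 s i.-1 ; seq[i-1] is nth 0 s (i-2) ; seq[i-2] is nth 0 s (i-3). *)
Definition algA_step (e0 : seq int) (st : seq int * option int) (i : nat)
  : seq int * option int :=
  let: (s, last) := st in
  if occurs pat_p e0 (i - 2) then
    (set_nth 0 s i.-1 (nth 0 s (i - 2)), Some (nth 0 s i.-1))
  else if occurs pat_q e0 (i - 2) then
    (set_nth 0 s i.-1 (nth 0 s (i - 3)), Some (nth 0 s i.-1))
  else if occurs pat_p s (i - 2) || occurs pat_q s (i - 2) then
    match last with
    | Some l => (set_nth 0 s i.-1 l, Some (nth 0 s i.-1))
    | None => (s, last) (* swap with null: never reached *)
    end
  else (s, last).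

Definition algA (e : seq int) : seq int :=
  (foldl (algA_step e) (e, None) (iota 1 (size e))).1.

From mathcomp Require Import all_boot all_order all_algebra zify.
Import Order.TTheory GRing.Theory Num.Theory.
Set Implicit Arguments. Unset Strict Implicit. Unset Printing Implicit Defensive.
Local Open Scope ring_scope.

(* Call position m modified when the output f has f_m <> e_m.  Algorithm A
   writes position k+2 only while it scans the window at k, and a scan from
   left to right keeps three facts true.  A modified position m has an
   unmodified left neighbour, e_m and f_m are both at most e_(m-1), and
   e_(m-1) < e_(m+1).  The register last holds the original value of any
   modified position among the last two.  The window at k, read with its
   original fourth letter e_(k+3), is an occurrence of p in e exactly when it
   is an occurrence of q in f, and conversely.  At the
   end, if position k+3 is modified then both of its values are at most
   f_(k+2) = e_(k+2), so neither p nor q occurs at k in e or in f; otherwise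
   the fourth letters agree and the third fact is the exchange. *)

Lemma red4_pat (a b c d : int) :
  (red [:: a; b; c; d] == pat_p) = [&& a < b, c == a & b < d] /\
  (red [:: a; b; c; d] == pat_q) = [&& a < b, c == b & b < d].
Proof.
rewrite /red /=.
case: (ltgtP a b) => hab; case: (ltgtP a c) => hac; case: (ltgtP b c) => hbc;
  try (exfalso; lia).
all: case: (ltgtP a d) => had; case: (ltgtP b d) => hbd; case: (ltgtP c d) => hcd;
  try (exfalso; lia).
all: subst; do 3 (rewrite /= ?inE ?eqxx ?ltxx;
  repeat match goal with h : is_true (_ < _) |- _ =>
    rewrite ?h ?(lt_gtF h) ?(lt_eqF h) ?(gt_eqF h); move: h end; intros).
all: by [].
Qed.

Lemma red4_pat_p (a b c d : int) :
  (red [:: a; b; c; d] == pat_p) = [&& a < b, c == a & b < d].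
Proof. by case: (red4_pat a b c d). Qed.

Lemma red4_pat_q (a b c d : int) :
  (red [:: a; b; c; d] == pat_q) = [&& a < b, c == b & b < d].
Proof. by case: (red4_pat a b c d). Qed.

Lemma red4_no_pat (a b x c : int) : c <= x ->
  (red [:: a; b; x; c] == pat_p) = false /\ (red [:: a; b; x; c] == pat_q) = false.
Proof. by rewrite red4_pat_p red4_pat_q; split; lia. Qed.

Lemma occurs0 (pat : seq nat) (s : seq int) : occurs pat s 0 = false.
Proof. by []. Qed.

Lemma occursE (pat : seq nat) (s : seq int) (j : nat) :
  occurs pat s j.+1 =
    (j.+4 <= size s)%N && (red [:: s`_j; s`_j.+1; s`_j.+2; s`_j.+3] == pat).
Proof.
rewrite /occurs addn3 /=; case: leqP => //= hj.
by do 4 (rewrite (drop_nth (0 : int)); last lia); rewrite /= take0.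
Qed.

Definition swapped (w w' : seq int) : Prop :=
  (red w == pat_p) = (red w' == pat_q) /\ (red w == pat_q) = (red w' == pat_p).

(* The value Algorithm A writes at the third letter of a window with original
   letters [a b x c], whose first two letters currently hold [a'] and [b'],
   when the register last holds [l]; [None] means that nothing is written. *)
Definition window_update (a b x c a' b' : int) (l : option int) : option int :=
  if red [:: a; b; x; c] == pat_p then Some b'
  else if red [:: a; b; x; c] == pat_q then Some a'
  else if (red [:: a'; b'; x; c] == pat_p) || (red [:: a'; b'; x; c] == pat_q)
  then l else None.

Lemma algA_step_head (e : seq int) (st : seq int * option int) (i : nat) :
  (i <= 2)%N -> algA_step e st i = st.
Proof.
by case: st => s l hi; rewrite /algA_step; have -> : (i - 2 = 0)%N by lia.
Qed.

Lemma algA_stepE (e s : seq int) (l : option int) (k : nat) :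
  size s = size e -> s`_k.+2 = e`_k.+2 -> s`_k.+3 = e`_k.+3 ->
  algA_step e (s, l) k.+3 =
    if (k.+4 <= size e)%N then
      if window_update e`_k e`_k.+1 e`_k.+2 e`_k.+3 s`_k s`_k.+1 l is Some y
      then (set_nth 0 s k.+2 y, Some e`_k.+2) else (s, l)
    else (s, l).
Proof.
move=> ss sx sc; rewrite /algA_step /window_update !subSS !subn0 /= !occursE ss sx sc.
by case: leqP => _ //=; do 3 (case: ifP => _ //); case: l.
Qed.

Section WindowUpdate.

Variables (a b x c a' b' : int) (l : option int).
Hypothesis changed_left : a' != a -> a < b /\ a' < b.
Hypothesis changed_mid : b' != b -> [/\ a' = a, b <= a, b' <= a & a < x].
Hypothesis changed_last : a' != a -> l = Some a.

Lemma window_update_shape (y : int) :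
  window_update a b x c a' b' l = Some y -> [/\ b' = b, x <= b, y <= b & b < c].
Proof.
rewrite /window_update !red4_pat_p !red4_pat_q.
case: (eqVneq b' b) => [-> | /changed_mid [-> ba b'a ax]]; last by rewrite !ifF //; lia.
case: ifP => [/and3P[ab /eqP-> bc] [<-] | np]; first by split; lia.
case: ifP => [/and3P[ab /eqP-> bc] [<-] | nq].
  by case: (eqVneq a' a) => [-> | /changed_left]; split; lia.
case: (eqVneq a' a) => [-> | /[dup] /changed_last -> /changed_left [ab a'b]].
  by rewrite np nq.
by case: ifP => // hs [<-]; split; lia.
Qed.

Lemma window_update_swapped :
  swapped [:: a; b; x; c] [:: a'; b'; odflt x (window_update a b x c a' b' l); c].
Proof.
rewrite /swapped /window_update !red4_pat_p !red4_pat_q.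
case: (eqVneq b' b) => [-> | /changed_mid [-> ba b'a ax]]; last by rewrite !ifF //=; lia.
case: ifP => [/and3P[ab /eqP-> bc] | np] /=.
  by case: (eqVneq a' a) => [-> | /changed_left]; lia.
case: ifP => [/and3P[ab /eqP-> bc] | nq] /=.
  by case: (eqVneq a' a) => [-> | /changed_left]; lia.
case: (eqVneq a' a) => [-> | /[dup] /changed_last -> /changed_left [ab a'b]].
  by rewrite np nq /=; lia.
by case: ifP => hs /=; lia.
Qed.

End WindowUpdate.

(* The state after [i] steps of the scan; the window at [k] is compared using
   e_(k+3) because position k+3 may still be written later. *)
Record invariant (e : seq int) (i : nat) (s : seq int) (l : option int) : Prop :=
  Invariant {
    inv_size : size s = size e;
    inv_todo : forall k, (i <= k)%N -> s`_k = e`_k;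
    inv_head : forall k, (k < 2)%N -> s`_k = e`_k;
    inv_changed : forall m, s`_m.+1 != e`_m.+1 ->
      [/\ s`_m = e`_m, e`_m.+1 <= e`_m, s`_m.+1 <= e`_m & e`_m < e`_m.+2];
    inv_swapped : forall k, (k.+2 < i)%N -> (k.+3 < size e)%N ->
      swapped [:: e`_k; e`_k.+1; e`_k.+2; e`_k.+3] [:: s`_k; s`_k.+1; s`_k.+2; e`_k.+3];
    inv_last : forall k, (k < i <= k.+2)%N -> s`_k != e`_k -> l = Some e`_k
  }.

Lemma invariant0 (e : seq int) : invariant e 0 e None.
Proof. by split=> // k; rewrite ?eqxx. Qed.

Lemma invariant_changed_left (e : seq int) i s l k :
  invariant e i s l -> s`_k != e`_k -> e`_k < e`_k.+1 /\ s`_k < e`_k.+1.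
Proof.
case: k => [|m] inv; first by rewrite (inv_head inv) ?eqxx.
by case/(inv_changed inv) => _; lia.
Qed.

Lemma invariant_skip (e : seq int) i s l :
  invariant e i s l ->
  (forall k, i = k.+2 -> (k.+3 < size e)%N ->
     swapped [:: e`_k; e`_k.+1; e`_k.+2; e`_k.+3] [:: s`_k; s`_k.+1; s`_k.+2; e`_k.+3]) ->
  invariant e i.+1 s l.
Proof.
move=> [ss todo head changed swap last] swap_i; split=> // k.
- by move=> hk; apply: todo; lia.
- by case: (ltngtP k.+2 i) => [/swap // | | /esym /swap_i //]; lia.
- case: (ltngtP k i) => [hk /andP[_ hk'] | | ->]; last by rewrite todo ?eqxx.
  + by apply: last; lia.
  + by lia.
Qed.

Lemma invariant_write (e : seq int) k s l (y : int) :
  invariant e k.+2 s l -> (k.+2 < size e)%N ->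
  [/\ s`_k.+1 = e`_k.+1, e`_k.+2 <= e`_k.+1, y <= e`_k.+1 & e`_k.+1 < e`_k.+3] ->
  swapped [:: e`_k; e`_k.+1; e`_k.+2; e`_k.+3] [:: s`_k; s`_k.+1; y; e`_k.+3] ->
  invariant e k.+3 (set_nth 0 s k.+2 y) (Some e`_k.+2).
Proof.
move=> [ss todo head changed swap last] hk shape swap_k.
have s'E j : (set_nth 0 s k.+2 y)`_j = if j == k.+2 then y else s`_j.
  by rewrite nth_set_nth.
split=> [|j|j|m|j|j]; rewrite ?s'E.
- by rewrite size_set_nth ss; apply/maxn_idPr.
- move=> hj; have /negbTE-> : j != k.+2 by lia.
  by apply: todo; lia.
- move=> hj; have /negbTE-> : j != k.+2 by lia.
  exact: head.
- case: (ltngtP m.+1 k.+2) => [hm | hm | [->]].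
  + have /negbTE-> : m != k.+2 by lia.
    exact: changed.
  + by rewrite todo ?eqxx //; lia.
  + by rewrite (ltn_eqF (ltnSn k.+1)).
- move=> hj hje; have /negbTE-> : j != k.+2 by lia.
  case: (ltngtP j k) => [hjk | hjk | ->]; last by rewrite eqxx (ltn_eqF (ltnSn k.+1)).
  + have /negbTE-> : j.+2 != k.+2 by lia.
    have /negbTE-> : j.+1 != k.+2 by lia.
    by apply: swap; lia.
  + by lia.
- move=> /andP[hj hj']; case: (eqVneq j k.+2) => [-> //| hjk].
  have -> : j = k.+1 by lia.
  by case: shape => ->; rewrite eqxx.
Qed.

Lemma invariant_step (e s : seq int) (l : option int) (i : nat) :
  (i < size e)%N -> invariant e i s l ->
  invariant e i.+1 (algA_step e (s, l) i.+1).1 (algA_step e (s, l) i.+1).2.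
Proof.
case: i => [|[|k]] hi inv.
1,2: by rewrite algA_step_head //=; apply: (invariant_skip inv) => k' ik; exfalso; lia.
have [ss todo _ changed _ last] := inv.
rewrite algA_stepE ?(todo k.+2) ?(todo k.+3) //; case: leqP => hwin /=.
  by apply: (invariant_skip inv) => k' ik hk; exfalso; lia.
have changed_left := invariant_changed_left (k := k) inv.
have changed_last : s`_k != e`_k -> l = Some e`_k by apply: last; lia.
have := window_update_swapped e`_k.+3 changed_left (changed k) changed_last.
case E: window_update => [y|] /= swap_k.
  by apply: (invariant_write inv) => //; exact: (window_update_shape changed_left (changed k) changed_last E).
by apply: (invariant_skip inv) => k' /eqP; rewrite !eqSS => /eqP <- _; rewrite (todo k.+2).
Qed.

Lemma invariant_foldl (e : seq int) (i k : nat) (st : seq int * option int) :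
  (i + k <= size e)%N -> invariant e i st.1 st.2 ->
  let st' := foldl (algA_step e) st (iota i.+1 k) in invariant e (i + k) st'.1 st'.2.
Proof.
elim: k i st => [|k IH] i st hk inv; first by rewrite addn0.
rewrite /= -addSnnS; apply: IH; first by rewrite addSnnS.
by case: st inv => s l inv; apply: invariant_step => //; lia.
Qed.

Lemma invariant_algA (e : seq int) : exists l, invariant e (size e) (algA e) l.
Proof. by eexists; apply: (invariant_foldl (i := 0)) => //; exact: invariant0. Qed.

Lemma occurs_algA (e : seq int) (j : nat) :
  occurs pat_p e j = occurs pat_q (algA e) j /\
  occurs pat_q e j = occurs pat_p (algA e) j.
Proof.
have [l [ss _ _ changed swap _]] := invariant_algA e.
case: j => [|j]; first by rewrite !occurs0.
rewrite !occursE ss; case: leqP => hj //=.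
case: (eqVneq (algA e)`_j.+3 e`_j.+3) => [-> | /changed [-> cx fx _]].
  by apply: swap; lia.
have [-> ->] := red4_no_pat e`_j e`_j.+1 cx.
by have [-> ->] := red4_no_pat (algA e)`_j (algA e)`_j.+1 fx.
Qed.

Theorem theorem3 (e : seq int) :
  Em pat_p e = Em pat_q (algA e) /\ Em pat_q e = Em pat_p (algA e).
Proof.
have [l [ss _ _ _ _ _]] := invariant_algA e.
by rewrite /Em ss; split; apply: eq_filter => j; case: (occurs_algA e j).
Qed.
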